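(* Let $N_{\mathsf s}\ge1$ be an integer and $\beta>0$, and for $\gamma>0$ define \[ I(\gamma):=\beta\sum_{k\ge0}\frac{(N_{\mathsf s}^2\beta)^k}{k!}e^{-N_{\mathsf s}^2\beta}\log_2\!\Big(1+\frac{\gamma}{1+\frac{k}{N_{\mathsf s}^2}\gamma}\Big). \] Then its high-SNR slope is \[ \mathcal S_\infty:=\lim_{\gamma\to\infty}\gamma\,\ln 2\,\frac{dI}{d\gamma}(\gamma)=\beta e^{-N_{\mathsf s}^2\beta}. \]
   Context: $I(\gamma)$ is the large-system mutual information (bits/s/Hz) of time-hopping CDMA with $N_{\mathsf s}$ pulses per symbol, Gaussian inputs, and a bank of single-user matched filters followed by independent decoders knowing the spreading matrix. *)

From Stdlib Require Import Reals.
From Coquelicot Require Import Coquelicot.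
Open Scope R_scope.

Definition log2 (x : R) : R := ln x / ln 2.

Definition I_term (Ns : nat) (beta gamma : R) (k : nat) : R :=
  ((INR Ns ^ 2 * beta) ^ k / INR (Stdlib.Arith.Factorial.fact k)) * exp (- (INR Ns ^ 2 * beta))
  * log2 (1 + gamma / (1 + (INR k / INR Ns ^ 2) * gamma)).

Definition I_TH (Ns : nat) (beta gamma : R) : R :=
  beta * Series (I_term Ns beta gamma).

(** Each term of the series is a Poisson weight [p_k] times [log2 (1 + g / (1 + b_k g))]
    with [b_k = k / Ns^2], whose derivative is [1 / ((1 + (b_k + 1) g) (1 + b_k g)) / ln 2].
    These derivatives are bounded by [p_k / ln 2], so the series may be differentiated
    termwise, and [g ln 2 I'(g) = beta * sum_k p_k q_k(g)] with [0 <= q_k(g) <= 1].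
    The term [k = 0] contributes [p_0 g / (1 + g) -> p_0 = exp (- Ns^2 beta)], while every
    [q_k(g)] with [k >= 1] is at most [Ns^2 / g]; hence the error is [O(1/g)]. *)

From Stdlib Require Import Reals Lra Lia.
From Coquelicot Require Import Coquelicot.
Open Scope R_scope.

Lemma is_derive_Series (f f' : nat -> R -> R) (M : nat -> R) (x : R) (r : posreal) :
  (forall k y, Boule x r y -> is_derive (f k) y (f' k y)) ->
  (forall k y, Boule x r y -> Rabs (f' k y) <= M k) ->
  ex_series M ->
  (forall y, Boule x r y -> ex_series (fun k => f k y)) ->
  is_derive (fun y => Series (fun k => f k y)) x (Series (fun k => f' k x)).
Proof.
  intros Hder Hdom HM Hex.
  assert (Bx : Boule x r x).
  { unfold Boule. rewrite Rminus_eq_0, Rabs_R0. apply cond_pos. }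
  assert (M_ge0 : forall k, 0 <= M k).
  { intros k. apply Rle_trans with (2 := Hdom k x Bx). apply Rabs_pos. }
  pose (g' k y := f' k (y + x)).
  assert (Hcvn : CVN_r g' r).
  { exists M, (Series M). split.
    - apply is_series_Reals, (is_series_ext M); [|now apply Series_correct].
      intros k. now rewrite Rabs_pos_eq.
    - intros k y hy. apply Hdom. unfold Boule in *.
      now replace (y + x - x) with (y - 0) by ring. }
  destruct (CVN_CVU_r g' r Hcvn 0) as [e He].
  { rewrite Rabs_R0. apply cond_pos. }
  pose (d := mkposreal (Rmin e r) (Rmin_pos _ _ (cond_pos e) (cond_pos r))).
  assert (Hd : forall y, Boule x d y -> Boule x r y /\ Boule 0 e (y - x)).
  { unfold Boule; simpl. intros y hy. rewrite Rminus_0_r.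
    pose proof (Rmin_l e r). pose proof (Rmin_r e r). split; lra. }
  apply is_derive_Reals.
  apply (CVU_derivable (fun n y => sum_f_R0 (fun k => f k y) n)
           (fun n y => sum_f_R0 (fun k => f' k y) n)
           (fun y => Series (fun k => f k y)) (fun y => Series (fun k => f' k y)) x d);
    [| | |unfold Boule; rewrite Rminus_eq_0, Rabs_R0; apply cond_pos].
  - intros eps heps. destruct (He eps heps) as [N HN]. exists N.
    intros n y hn hy. destruct (Hd y hy) as [_ hy'].
    specialize (HN n (y - x) hn hy'). unfold g', SP in HN.
    now replace (y - x + x) with y in HN by ring.
  - intros y hy. destruct (Hd y hy) as [hy' _].
    apply is_series_Reals, Series_correct, Hex, hy'.
  - intros n y hy. destruct (Hd y hy) as [hy' _]. apply is_derive_Reals.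
    induction n as [|n IH]; simpl; [now apply Hder|].
    apply (is_derive_plus _ (f (S n))); [exact IH|now apply Hder].
Qed.

Lemma is_lim_p_infty_of_dist_le_inv (f : R -> R) (L K : R) :
  (forall x, 0 < x -> Rabs (f x - L) <= K / x) -> is_lim f p_infty L.
Proof.
  intros Hf. apply is_lim_spec. simpl. intros eps.
  pose proof (cond_pos eps) as he.
  exists (Rmax 1 (Rabs K / eps)). intros x hx.
  pose proof (Rmax_l 1 (Rabs K / eps)). pose proof (Rmax_r 1 (Rabs K / eps)).
  assert (hx0 : 0 < x) by lra.
  apply Rle_lt_trans with (1 := Hf x hx0).
  apply (Rmult_lt_reg_r x); [exact hx0|].
  replace (K / x * x) with K by (field; lra).
  assert (Rabs K / eps * eps < x * eps) by (apply Rmult_lt_compat_r; lra).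
  replace (Rabs K / eps * eps) with (Rabs K) in H1 by (field; lra).
  pose proof (Rle_abs K). nra.
Qed.

Definition poisson (lam : R) (k : nat) : R := lam ^ k / INR (Factorial.fact k) * exp (- lam).

Lemma poisson_ge0 (lam : R) (k : nat) : 0 <= lam -> 0 <= poisson lam k.
Proof.
  intros hl. unfold poisson. apply Rmult_le_pos; [|left; apply exp_pos].
  apply Rdiv_le_0_compat; [now apply pow_le|].
  apply lt_0_INR, Factorial.lt_O_fact.
Qed.

Lemma poisson_0 (lam : R) : poisson lam 0 = exp (- lam).
Proof. unfold poisson. simpl. field. Qed.

Lemma is_series_poisson (lam : R) : is_series (poisson lam) 1.
Proof.
  rewrite <- exp_0, <- (Rplus_opp_r lam), exp_plus.
  apply (is_series_ext (fun k => scal (pow_n lam k) (/ INR (Factorial.fact k)) * exp (- lam))).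
  - intros k. rewrite pow_n_pow. unfold poisson, scal; simpl. unfold mult; simpl.
    unfold Rdiv. ring.
  - apply is_series_scal_r, is_exp_Reals.
Qed.

Lemma Series_ge0 (a : nat -> R) : ex_series a -> (forall k, 0 <= a k) -> 0 <= Series a.
Proof.
  intros Ha Ha0. rewrite <- (Rmult_0_l (Series a)), <- Series_scal_l.
  apply Series_le; [|exact Ha]. intros k. specialize (Ha0 k). lra.
Qed.

Lemma Series_mix_sub_head (w q : nat -> R) (c : R) :
  is_series w 1 -> (forall k, 0 <= w k) -> (forall k, 0 <= q k <= 1) ->
  (forall k, q (S k) <= c) ->
  Rabs (Series (fun k => w k * q k) - w 0%nat) <= (1 - q 0%nat) + c.
Proof.
  intros Hw w_ge0 Hq Hc.
  assert (Hw1 : is_series (fun k => w (S k)) (1 - w 0%nat)).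
  { apply is_series_incr_1. unfold plus; simpl.
    now replace (1 - w 0%nat + w 0%nat) with 1 by ring. }
  assert (Hex : ex_series (fun k => w k * q k)).
  { apply (@ex_series_le R_AbsRing R_CompleteNormedModule _ w); [|now exists 1].
    intros k. change norm with Rabs; simpl.
    pose proof (Hq k). pose proof (w_ge0 k). rewrite Rabs_pos_eq; nra. }
  assert (Htail_ge0 : 0 <= Series (fun k => w (S k) * q (S k))).
  { apply Series_ge0; [exact (proj1 (ex_series_incr_1 _) Hex)|].
    intros k. pose proof (Hq (S k)). pose proof (w_ge0 (S k)). nra. }
  assert (Htail_le : Series (fun k => w (S k) * q (S k)) <= (1 - w 0%nat) * c).
  { rewrite <- (is_series_unique _ _ Hw1), <- Series_scal_r. apply Series_le.
    - intros k. pose proof (Hq (S k)). pose proof (Hc k). pose proof (w_ge0 (S k)).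
      split; nra.
    - apply ex_series_scal_r. now exists (1 - w 0%nat). }
  assert (w0_le1 : w 0%nat <= 1).
  { pose proof (is_series_unique _ _ Hw1).
    assert (0 <= Series (fun k => w (S k))).
    { apply Series_ge0; [now exists (1 - w 0%nat)|]. intros k; apply w_ge0. }
    lra. }
  pose proof (Hq 0%nat). pose proof (Hc 0%nat). pose proof (Hq 1%nat). pose proof (w_ge0 0%nat).
  rewrite (Series_incr_1 _ Hex). apply Rabs_le. nra.
Qed.

Definition sinr_rate (b g : R) : R := ln (1 + g / (1 + b * g)).

Definition sinr_rate_deriv (b g : R) : R := / ((1 + (b + 1) * g) * (1 + b * g)).

Section SinrRate.

Variables (b g : R).
Hypotheses (hb : 0 <= b) (hg : 0 < g).

Lemma is_derive_sinr_rate : is_derive (sinr_rate b) g (sinr_rate_deriv b g).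
Proof.
  assert (h1 : 0 < 1 + b * g) by nra.
  assert (h2 : 0 < g / (1 + b * g)) by (apply Rdiv_lt_0_compat; lra).
  unfold sinr_rate, sinr_rate_deriv. auto_derive.
  - repeat split; lra.
  - field. repeat split; nra.
Qed.

Lemma sinr_rate_bounds : 0 <= sinr_rate b g <= ln (1 + g).
Proof.
  assert (h1 : 0 < 1 + b * g) by nra.
  assert (h2 : 0 < g / (1 + b * g)) by (apply Rdiv_lt_0_compat; lra).
  assert (h3 : g / (1 + b * g) <= g).
  { apply (Rmult_le_reg_r (1 + b * g)); [lra|].
    unfold Rdiv. rewrite Rmult_assoc, Rinv_l; nra. }
  unfold sinr_rate. rewrite <- ln_1. split; apply ln_le; lra.
Qed.

Lemma sinr_rate_deriv_bounds : 0 <= sinr_rate_deriv b g <= 1.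
Proof.
  unfold sinr_rate_deriv. rewrite <- Rinv_1. split.
  - left. apply Rinv_0_lt_compat. nra.
  - apply Rinv_le_contravar; nra.
Qed.

Lemma scaled_sinr_rate_deriv_bounds : 0 <= g * sinr_rate_deriv b g <= 1.
Proof.
  unfold sinr_rate_deriv.
  assert (hD : 0 < (1 + (b + 1) * g) * (1 + b * g)) by nra.
  split.
  - apply Rmult_le_pos; [lra|]. left. now apply Rinv_0_lt_compat.
  - apply (Rmult_le_reg_r _ _ _ hD). rewrite Rmult_assoc, Rinv_l; nra.
Qed.

Lemma scaled_sinr_rate_deriv_le : 0 < b -> g * sinr_rate_deriv b g <= / (b * g).
Proof.
  intros hb0. unfold sinr_rate_deriv.
  assert (hD : 0 < (1 + (b + 1) * g) * (1 + b * g)) by nra.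
  assert (hbg : 0 < b * g) by nra.
  apply (Rmult_le_reg_r _ _ _ hD). rewrite Rmult_assoc, Rinv_l by lra.
  apply (Rmult_le_reg_l (b * g)); [lra|].
  replace (b * g * (/ (b * g) * ((1 + (b + 1) * g) * (1 + b * g))))
    with ((1 + (b + 1) * g) * (1 + b * g)) by (field; lra).
  nra.
Qed.

End SinrRate.

Lemma ln2_pos : 0 < ln 2.
Proof. rewrite <- ln_1. apply ln_increasing; lra. Qed.

Section MatchedFilterCapacity.

Variables (Ns : nat) (beta : R).
Hypotheses (hNs : (1 <= Ns)%nat) (hbeta : 0 < beta).

Let lam := INR Ns ^ 2 * beta.
Let load (k : nat) := INR k / INR Ns ^ 2.

Lemma INR_Ns_pos : 0 < INR Ns.
Proof. apply lt_0_INR. lia. Qed.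

Lemma Ns2_pos : 0 < INR Ns ^ 2.
Proof. apply pow_lt, INR_Ns_pos. Qed.

Lemma lam_ge0 : 0 <= lam.
Proof. pose proof Ns2_pos. unfold lam. nra. Qed.

Lemma load_ge0 (k : nat) : 0 <= load k.
Proof. apply Rdiv_le_0_compat; [apply pos_INR|exact Ns2_pos]. Qed.

Lemma load_S_inv_le (k : nat) (g : R) : 0 < g -> / (load (S k) * g) <= INR Ns ^ 2 / g.
Proof.
  intros hg. pose proof Ns2_pos. pose proof INR_Ns_pos. pose proof (pos_INR k).
  unfold load. rewrite S_INR.
  replace (/ ((INR k + 1) / INR Ns ^ 2 * g)) with (INR Ns ^ 2 / g / (INR k + 1))
    by (field; repeat split; lra).
  apply Rmult_le_reg_r with (INR k + 1); [lra|].
  unfold Rdiv at 1. rewrite Rmult_assoc, Rinv_l by lra.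
  assert (0 < INR Ns ^ 2 / g) by (apply Rdiv_lt_0_compat; lra). nra.
Qed.

Lemma I_term_eq (g : R) (k : nat) :
  I_term Ns beta g k = poisson lam k * (sinr_rate (load k) g / ln 2).
Proof. reflexivity. Qed.

Lemma ex_series_I_term (g : R) : 0 < g -> ex_series (I_term Ns beta g).
Proof.
  intros hg. pose proof ln2_pos.
  apply (@ex_series_le R_AbsRing R_CompleteNormedModule _
           (fun k => poisson lam k * (ln (1 + g) / ln 2))).
  - intros k. change norm with Rabs; simpl. rewrite I_term_eq.
    pose proof (poisson_ge0 lam k lam_ge0). pose proof (sinr_rate_bounds (load k) g (load_ge0 k) hg).
    rewrite Rabs_pos_eq.
    + apply Rmult_le_compat_l; [lra|]. unfold Rdiv. apply Rmult_le_compat_r; [|lra].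
      left. now apply Rinv_0_lt_compat.
    + apply Rmult_le_pos; [lra|]. apply Rdiv_le_0_compat; lra.
  - apply ex_series_scal_r. now exists 1; apply is_series_poisson.
Qed.

Lemma is_derive_I_TH (g : R) : 0 < g ->
  is_derive (I_TH Ns beta) g
    (beta * Series (fun k => poisson lam k * (sinr_rate_deriv (load k) g / ln 2))).
Proof.
  intros hg. pose proof ln2_pos. apply is_derive_scal.
  pose (r := mkposreal (g / 2) ltac:(lra)).
  assert (Hpos : forall y, Boule g r y -> 0 < y).
  { unfold Boule; simpl. intros y hy. apply Rabs_def2 in hy. lra. }
  apply (is_derive_Series (fun k y => I_term Ns beta y k)
           (fun k y => poisson lam k * (sinr_rate_deriv (load k) y / ln 2))
           (fun k => poisson lam k / ln 2) g r).
  - intros k y hy.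
    apply (is_derive_ext (fun y => poisson lam k / ln 2 * sinr_rate (load k) y)).
    { intros z. rewrite I_term_eq. unfold Rdiv.
      now rewrite Rmult_assoc, (Rmult_comm (/ ln 2)). }
    replace (poisson lam k * (sinr_rate_deriv (load k) y / ln 2))
      with (poisson lam k / ln 2 * sinr_rate_deriv (load k) y) by (unfold Rdiv; ring).
    apply is_derive_scal, is_derive_sinr_rate; [apply load_ge0|now apply Hpos].
  - intros k y hy. pose proof (poisson_ge0 lam k lam_ge0).
    pose proof (sinr_rate_deriv_bounds (load k) y (load_ge0 k) (Hpos y hy)).
    assert (0 < / ln 2) by now apply Rinv_0_lt_compat.
    rewrite Rabs_pos_eq; unfold Rdiv.
    + apply Rmult_le_compat_l; nra.
    + apply Rmult_le_pos; nra.
  - unfold Rdiv. apply ex_series_scal_r. now exists 1; apply is_series_poisson.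
  - intros y hy. now apply ex_series_I_term, Hpos.
Qed.

Lemma slope_dist_le (g : R) : 0 < g ->
  Rabs (g * ln 2 * Derive (I_TH Ns beta) g - beta * exp (- lam))
  <= beta * (1 + INR Ns ^ 2) / g.
Proof.
  intros hg. pose proof ln2_pos. pose proof Ns2_pos.
  pose (q k := g * sinr_rate_deriv (load k) g).
  rewrite (is_derive_unique _ _ _ (is_derive_I_TH g hg)).
  replace (g * ln 2 * (beta * Series (fun k => poisson lam k * (sinr_rate_deriv (load k) g / ln 2))))
    with (beta * Series (fun k => poisson lam k * q k)).
  2: { set (F := fun k => poisson lam k * (sinr_rate_deriv (load k) g / ln 2)).
       replace (g * ln 2 * (beta * Series F)) with (beta * (g * ln 2 * Series F)) by ring.
       rewrite <- (Series_scal_l (g * ln 2) F). f_equal.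
       apply Series_ext. intros k. unfold q, F. field. lra. }
  assert (Hmix := Series_mix_sub_head (poisson lam) q (INR Ns ^ 2 / g)
                    (is_series_poisson lam) (fun k => poisson_ge0 lam k lam_ge0)
                    (fun k => scaled_sinr_rate_deriv_bounds (load k) g (load_ge0 k) hg)).
  rewrite poisson_0 in Hmix.
  assert (Hq0 : 1 - q 0%nat = / (1 + g)).
  { unfold q, sinr_rate_deriv, load. simpl. rewrite Rdiv_0_l. field. lra. }
  rewrite Hq0 in Hmix.
  assert (Hq0_le : / (1 + g) <= 1 / g).
  { unfold Rdiv. rewrite Rmult_1_l. apply Rinv_le_contravar; lra. }
  rewrite <- Rmult_minus_distr_l, Rabs_mult, Rabs_pos_eq by lra.
  replace (beta * (1 + INR Ns ^ 2) / g) with (beta * (1 / g + INR Ns ^ 2 / g)) by (field; lra).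
  apply Rmult_le_compat_l; [lra|].
  apply Rle_trans with (2 := Rplus_le_compat_r _ _ _ Hq0_le), Hmix.
  intros k. apply Rle_trans with (2 := load_S_inv_le k g hg).
  apply scaled_sinr_rate_deriv_le; [exact hg|].
  unfold load. apply Rdiv_lt_0_compat; [apply lt_0_INR; lia|exact Ns2_pos].
Qed.

End MatchedFilterCapacity.

Theorem corollary3 (Ns : nat) (beta : R) (hNs : (1 <= Ns)%nat) (hbeta : 0 < beta) :
  (forall gamma : R, 0 < gamma -> ex_derive (I_TH Ns beta) gamma) /\
  is_lim (fun gamma => gamma * ln 2 * Derive (I_TH Ns beta) gamma) p_infty
    (beta * exp (- (INR Ns ^ 2 * beta))).
Proof.
  split.
  - intros g hg. eexists. now apply is_derive_I_TH.
  - apply (is_lim_p_infty_of_dist_le_inv _ _ (beta * (1 + INR Ns ^ 2))).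
    now apply slope_dist_le.
Qed.
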